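(* Let $G=(V,E)$ be the complete graph on $V=\{1,\ldots,n\}$ with real edge weights $(a_{ij})$, and let $V=L\cup R$ be a partition with $\sum_{i\in L,\,j\in R}|a_{ij}|\geqslant\frac12\sum_{ij\in E}|a_{ij}|$. Then there exists $S\subseteq L$ with \[\sum_{j\in R}\left|\sum_{i\in S}a_{ij}\right|\geqslant\frac{1}{200\sqrt n}\sum_{ij\in E}|a_{ij}|.\]
   Context: $L\cap R=\emptyset$, and $a_{ij}=a_{ji}$ denotes the weight of the edge $\{i,j\}$. *)

From HB Require Import structures.
From mathcomp Require Import all_boot all_order all_algebra.
Set Implicit Arguments. Unset Strict Implicit. Unset Printing Implicit Defensive.
Import Order.TTheory GRing.Theory Num.Theory.
Local Open Scope ring_scope.

Definition total_weight (R : numDomainType) (n : nat) (a : 'I_n -> 'I_n -> R) : R :=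
  \sum_(i < n) \sum_(j < n | (i < j)%N) `|a i j|.

From HB Require Import structures.
From mathcomp Require Import all_boot all_order all_algebra.
From mathcomp Require Import ring lra.
Set Implicit Arguments. Unset Strict Implicit. Unset Printing Implicit Defensive.
Import Order.TTheory GRing.Theory Num.Theory.
Local Open Scope ring_scope.

(* Average over all subsets S of L.  For a fixed column j, the sum X_S of the
   a_ij over i in S, for S uniformly random, has E X^2 = (s^2 + q)/4 and
   E X^4 <= 3 (E X^2)^2, where s and q are the sum and the sum of squares of
   the a_ij over i in L.  Averaging the pointwise inequality
   3 lam^2 t^2 <= 2 lam^3 |t| + t^4 at lam = 2 sqrt(E X^2) turns the fourth
   moment bound into E|X| >= (9/16) sqrt(E X^2) >= (9/32) sqrt q, and
   Cauchy-Schwarz gives sqrt q >= (sum of the |a_ij|) / sqrt |L|.  Summing over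
   j in R and using the cut hypothesis, the average, hence some S, reaches
   (9/64) total_weight a / sqrt n. *)


Lemma sqr_sum_norm_le (R : realFieldType) (I : finType) (A : {pred I}) (x : I -> R) :
  (\sum_(k in A) `|x k|) ^+ 2 <= #|A|%:R * \sum_(k in A) x k ^+ 2.
Proof.
have amgm (u v : R) : `|u| * `|v| <= (u ^+ 2 + v ^+ 2) / 2.
  rewrite -(real_normK (num_real u)) -(real_normK (num_real v)).
  by have := sqr_ge0 (`|u| - `|v|); lra.
rewrite expr2 mulr_suml.
apply: (@le_trans _ _ (\sum_(i in A) \sum_(j in A) (x i ^+ 2 + x j ^+ 2) / 2)).
  by apply: ler_sum => i _; rewrite mulr_sumr; apply: ler_sum => j _; apply: amgm.
under eq_bigr do rewrite -mulr_suml big_split sumr_const /=.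
rewrite -mulr_suml big_split sumr_const /= sumrMnl.
by set Q := \sum_(i in A) _; rewrite -[Q *+ _]mulr_natl; set mQ := _ * Q; lra.
Qed.

Lemma ler_cubic_sqr (R : realFieldType) (lam t : R) : 0 <= lam ->
  3 * lam ^+ 2 * t ^+ 2 <= 2 * lam ^+ 3 * `|t| + t ^+ 4.
Proof.
move=> lam_ge0; rewrite (exprM t 2 2) -(real_normK (num_real t)).
set u : R := `|t|; have u_ge0 : 0 <= u by rewrite normr_ge0.
have : 0 <= u * (u - lam) ^+ 2 * (u + 2 * lam).
  by apply: mulr_ge0; [exact: mulr_ge0 (sqr_ge0 _)|lra].
have -> : u * (u - lam) ^+ 2 * (u + 2 * lam) =
  2 * lam ^+ 3 * u + (u ^+ 2) ^+ 2 - 3 * lam ^+ 2 * u ^+ 2 by ring.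
by lra.
Qed.

Section SubsetAverage.
Variables (T : finType) (R : realFieldType).
Implicit Types (l : seq T) (B S : {set T}) (f g : {set T} -> R).

(* For uniq l disjoint from B, the mean of g (B :|: U) over all subsets U of l. *)
Fixpoint subset_avg l B g : R :=
  if l is i :: l' then (subset_avg l' (i |: B) g + subset_avg l' B g) / 2
  else g B.

Lemma subset_avg_const l B c : subset_avg l B (fun=> c) = c.
Proof. by elim: l B => [|i l IH] B //=; rewrite !IH; field. Qed.

Lemma subset_avgD l B f g :
  subset_avg l B (fun S => f S + g S) = subset_avg l B f + subset_avg l B g.
Proof. by elim: l B => [|i l IH] B //=; rewrite !IH; field. Qed.

Lemma subset_avgZ l B c f :
  subset_avg l B (fun S => c * f S) = c * subset_avg l B f.
Proof. by elim: l B => [|i l IH] B //=; rewrite !IH; field. Qed.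

Lemma subset_avg_sum l B (J : {set T}) (F : T -> {set T} -> R) :
  subset_avg l B (fun S => \sum_(j in J) F j S) = \sum_(j in J) subset_avg l B (F j).
Proof. by elim: l B => [|i l IH] B //=; rewrite !IH -big_split /= mulr_suml. Qed.

Lemma ler_subset_avg l B f g :
  (forall S, f S <= g S) -> subset_avg l B f <= subset_avg l B g.
Proof.
move=> le_fg; elim: l B => [|i l IH] B //=.
by have := IH (i |: B); have := IH B; lra.
Qed.

Lemma subset_avg_ge0 l B f : (forall S, 0 <= f S) -> 0 <= subset_avg l B f.
Proof. by move=> f_ge0; rewrite -(subset_avg_const l B 0); exact: ler_subset_avg. Qed.

Lemma subset_avg_le_max l B g :
  exists2 S : {set T}, S \subset B :|: [set x in l] & subset_avg l B g <= g S.
Proof.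
elim: l B => [|i l IH] B /=; first by exists B; rewrite ?subsetUl.
have [S1 sub1 le1] := IH (i |: B); have [S2 sub2 le2] := IH B.
have sub_iB : (i |: B) :|: [set x in l] \subset B :|: [set x in i :: l].
  by apply/subsetP => x; rewrite !inE -orbA => /or3P[->|->|->]; rewrite ?orbT.
have sub_B : B :|: [set x in l] \subset B :|: [set x in i :: l].
  by apply/subsetP => x; rewrite !inE => /orP[->|->]; rewrite ?orbT.
have [le21|lt12] := leP (subset_avg l (i |: B) g) (subset_avg l B g).
  by exists S2; [exact: subset_trans sub_B|lra].
by exists S1; [exact: subset_trans sub_iB|lra].
Qed.

Section Moments.
Variable x : T -> R.

Let sumS S := \sum_(k in S) x k.

Let fresh_cons i l B :
  uniq (i :: l) -> (forall k, k \in i :: l -> k \notin B) ->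
  [/\ uniq l, i \notin B, forall k, k \in l -> k \notin B
    & forall k, k \in l -> k \notin i |: B].
Proof.
case/andP=> il ul fresh; have fresh_l k : k \in l -> k \notin B.
  by move=> kl; apply: fresh; rewrite inE kl orbT.
split=> // [|k kl]; first by apply: fresh; rewrite inE eqxx.
rewrite !inE negb_or fresh_l // andbT.
by apply: contraNneq il => <-.
Qed.

Lemma subset_avg_sum_sqr l B : uniq l -> (forall k, k \in l -> k \notin B) ->
  subset_avg l B (fun S => sumS S ^+ 2) =
  (sumS B + (\sum_(k <- l) x k) / 2) ^+ 2 + (\sum_(k <- l) x k ^+ 2) / 4.
Proof.
elim: l B => [|i l IH] B /=; first by rewrite !big_nil => _ _; field.
move=> /fresh_cons/[apply] -[ul iB freshB freshiB].
by rewrite !IH // /sumS big_setU1 //= !big_cons; field.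
Qed.

Lemma subset_avg_sum_exp4 l B : uniq l -> (forall k, k \in l -> k \notin B) ->
  subset_avg l B (fun S => sumS S ^+ 4) <=
  (sumS B + (\sum_(k <- l) x k) / 2) ^+ 4
  + 3 / 2 * (sumS B + (\sum_(k <- l) x k) / 2) ^+ 2 * (\sum_(k <- l) x k ^+ 2)
  + 3 / 16 * (\sum_(k <- l) x k ^+ 2) ^+ 2.
Proof.
elim: l B => [|i l IH] B /=; first by rewrite !big_nil => _ _; lra.
move=> /fresh_cons/[apply] -[ul iB freshB freshiB].
have := IH _ ul freshiB; have := IH _ ul freshB.
rewrite /sumS big_setU1 //= !big_cons.
set b := \sum_(k in B) x k; set s := \sum_(k <- l) x k.
set q := \sum_(k <- l) x k ^+ 2; set y := x i.
have y4_ge0 : 0 <= y ^+ 4 by rewrite (exprM y 2 2) sqr_ge0.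
(* the excess of the bound over the average of the two branch bounds is y^4/8 *)
have -> : (b + (y + s) / 2) ^+ 4 + 3 / 2 * (b + (y + s) / 2) ^+ 2 * (y ^+ 2 + q)
    + 3 / 16 * (y ^+ 2 + q) ^+ 2 =
  (((y + b + s / 2) ^+ 4 + 3 / 2 * (y + b + s / 2) ^+ 2 * q + 3 / 16 * q ^+ 2)
  + ((b + s / 2) ^+ 4 + 3 / 2 * (b + s / 2) ^+ 2 * q + 3 / 16 * q ^+ 2)) / 2
  + y ^+ 4 / 8 by field.
by lra.
Qed.

End Moments.
End SubsetAverage.

Lemma subset_avg_sqr_le_avg_norm (T : finType) (R : rcfType) (l : seq T) (B : {set T})
    (f : {set T} -> R) :
  subset_avg l B (fun S => f S ^+ 4) <= 3 * subset_avg l B (fun S => f S ^+ 2) ^+ 2 ->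
  81 * subset_avg l B (fun S => f S ^+ 2) <= 256 * subset_avg l B (fun S => `|f S|) ^+ 2.
Proof.
set m2 := subset_avg l B (fun S => f S ^+ 2); set m4 := subset_avg l B _.
set E := subset_avg l B (fun S => `|f S|).
move=> le_m4.
have m2_ge0 : 0 <= m2 by apply: subset_avg_ge0 => S; exact: sqr_ge0.
have E_ge0 : 0 <= E by apply: subset_avg_ge0 => S; exact: normr_ge0.
set s : R := Num.sqrt m2; have s_ge0 : 0 <= s by exact: sqrtr_ge0.
have m2E : m2 = s ^+ 2 by rewrite sqr_sqrtr.
have := ler_subset_avg l B (fun S => ler_cubic_sqr (f S) (mulr_ge0 (ler0n R 2) s_ge0)).
rewrite subset_avgD !subset_avgZ -/m2 -/m4 -/E m2E => avg_le.
rewrite m2E in le_m4 *.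
have [s_gt0|s_lt0|->] := ltrgt0P s; last by rewrite expr0n mulr0 mulr_ge0 ?sqr_ge0.
- have le_s_E : 9 * s <= 16 * E.
    rewrite -(ler_pM2l (exprn_gt0 3 s_gt0)).
    suff : s ^+ 3 * (9 * s) - s ^+ 3 * (16 * E) =
      3 * (2 * s) ^+ 2 * s ^+ 2 - (2 * (2 * s) ^+ 3 * E + 3 * (s ^+ 2) ^+ 2) by lra.
    by ring.
  by nra.
- by move: s_ge0; rewrite leNgt s_lt0.
Qed.

Lemma subset_avg_norm_sum_ge (T : finType) (R : rcfType) (A : {set T}) (x : T -> R) :
  9 * \sum_(k in A) `|x k| <=
  32 * Num.sqrt #|A|%:R * subset_avg (enum A) set0 (fun S => `|\sum_(k in S) x k|).
Proof.
have fresh k : k \in enum A -> k \notin set0 by rewrite inE.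
have M2 := subset_avg_sum_sqr x (enum_uniq A) fresh.
have M4 := subset_avg_sum_exp4 x (enum_uniq A) fresh.
rewrite big_set0 add0r !big_enum /= in M2 M4.
move: M2 M4; set s := \sum_(k in A) x k; set q := \sum_(k in A) x k ^+ 2.
set m2 := subset_avg _ _ _; set m4 := subset_avg _ _ _ => M2 M4.
have le_m4 : m4 <= 3 * m2 ^+ 2.
  have : 3 * m2 ^+ 2 - ((s / 2) ^+ 4 + 3 / 2 * (s / 2) ^+ 2 * q + 3 / 16 * q ^+ 2) =
    (s ^+ 2) ^+ 2 / 8 by rewrite M2; field.
  by have := sqr_ge0 (s ^+ 2); lra.
have := subset_avg_sqr_le_avg_norm le_m4; rewrite -/m2.
set E := subset_avg _ _ _ => le_m2_E.
have s2_ge0 : 0 <= s ^+ 2 by exact: sqr_ge0.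
have le_q_E : 81 * q <= 1024 * E ^+ 2 by rewrite M2 in le_m2_E; lra.
have E_ge0 : 0 <= E by apply: subset_avg_ge0 => S; exact: normr_ge0.
have m_ge0 : 0 <= #|A|%:R :> R by exact: ler0n.
have sum_ge0 : 0 <= \sum_(k in A) `|x k| by apply: sumr_ge0 => k _; exact: normr_ge0.
rewrite -ler_sqr ?nnegrE ?mulr_ge0 ?sqrtr_ge0 //.
rewrite !exprMn sqr_sqrtr //.
have := sqr_sum_norm_le A x; have := ler_wpM2l m_ge0 le_q_E.
rewrite -/q; set m := #|A|%:R.
rewrite mulrCA [m * (_ * _)]mulrCA -mulrA; set c := (\sum_(k in A) _) ^+ 2.
by set mq := m * q; set mE := m * _; lra.
Qed.

Theorem mainTheorem9 (R : rcfType) (n : nat) (a : 'I_n -> 'I_n -> R)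
  (a_sym : forall i j, a i j = a j i)
  (L Rs : {set 'I_n})
  (hdisj : L :&: Rs = set0) (hcover : L :|: Rs = setT)
  (hcut : \sum_(i in L) \sum_(j in Rs) `|a i j| >= total_weight a / 2) :
  exists S : {set 'I_n}, S \subset L /\
    \sum_(j in Rs) `|\sum_(i in S) a i j| >= total_weight a / (200 * Num.sqrt (n%:R)).
Proof.
set G := fun S : {set 'I_n} => (\sum_(j in Rs) `|\sum_(i in S) a i j| : R).
have avg_G : 9 * \sum_(i in L) \sum_(j in Rs) `|a i j| <=
    32 * Num.sqrt #|L|%:R * subset_avg (enum L) set0 G.
  rewrite subset_avg_sum exchange_big !mulr_sumr; apply: ler_sum => j _.
  exact: subset_avg_norm_sum_ge.
have [S sub_S le_S] := subset_avg_le_max (enum L) set0 G.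
exists S; split; first by rewrite set0U set_enum in sub_S.
have G_ge0 : 0 <= G S by apply: sumr_ge0 => j _; exact: normr_ge0.
have le_sqrt : Num.sqrt #|L|%:R <= Num.sqrt n%:R :> R.
  by rewrite ler_sqrt ?ler0n // ler_nat -[X in (_ <= X)%N]card_ord max_card.
have [n_gt0|n_lt0|->] := ltrgt0P (Num.sqrt n%:R : R); last first.
- by rewrite mulr0 invr0 mulr0.
- by move: (sqrtr_ge0 (n%:R : R)); rewrite leNgt n_lt0.
have avg_ge0 : 0 <= subset_avg (enum L) set0 G.
  by apply: subset_avg_ge0 => S'; apply: sumr_ge0 => j _; exact: normr_ge0.
have le_avg : Num.sqrt #|L|%:R * subset_avg (enum L) set0 G <= Num.sqrt n%:R * G S.
  by apply: ler_pM; rewrite ?sqrtr_ge0.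
rewrite ler_pdivrMr ?mulr_gt0 // -/(G S); set u := Num.sqrt n%:R * G S in le_avg *.
rewrite (_ : G S * _ = 200 * u); last by rewrite /u; ring.
have u_ge0 : 0 <= u by rewrite mulr_ge0 // ltW.
by move: avg_G le_avg; rewrite -mulrA; set v := _ * subset_avg _ _ _; lra.
Qed.
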